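(* $\mathcal I\subsetneq\mathcal U$, where $\mathcal I$ is the set of processes $P$ such that $\Gamma;\Delta\vdash_{\mathcal I}P::x:A$ is derivable in $\pi\mathsf{ILL}$ for some $\Gamma,\Delta,x,A$, and $\mathcal U$ is the set of processes $P$ such that $\Gamma;\Delta\vdash P::\Lambda$ is derivable in $\pi\mathsf{ULL}$ for some $\Gamma,\Delta,\Lambda$. (For instance, $x(y).x(\,).y[\,].\mathbf 0\in\mathcal U\setminus\mathcal I$.)
   Context: **Types.** $A,B::=\mathbf 1\mid\bot\mid A\otimes B\mid A\multimap B\mid \oplus\{i:A_i\}_{i\in I}\mid \&\{i:A_i\}_{i\in I}\mid {!}A\mid {?}A$. **Duality**: $\mathbf 1^\perp=\bot$, $\bot^\perp=\mathbf 1$, $(A\otimes B)^\perp=A\multimap B^\perp$, $(A\multimap B)^\perp=A\otimes B^\perp$, $(\oplus\{i:A_i\})^\perp=\&\{i:A_i^\perp\}$, $(\&\{i:A_i\})^\perp=\oplus\{i:A_i^\perp\}$, $({!}A)^\perp={?}A^\perp$, $({?}A)^\perp={!}A^\perp$; $A⅋B:=A^\perp\multimap B$. **Processes.** $P,Q::=\mathbf 0\mid \nu x\,P\mid P|Q\mid x[y].P\mid x(y).P\mid x\triangleleft \ell.P\mid x\triangleright\{i:P_i\}_{i\in I}\mid {!}x(y).P\mid [x\leftrightarrow y]\mid x[\,].P\mid x(\,).P$ (send, receive, select, branch, replicated receive, forwarder, empty send, empty receive). $y$ is bound in $\nu y\,P$, $x(y).P$, ${!}x(y).P$; processes up to $\alpha$-renaming;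 $P\{y/x\}$ capture-avoiding substitution. **Type system $\pi\mathsf{ULL}$.** Judgments $\Gamma;\Delta\vdash P::\Lambda$ ($\Gamma$ unrestricted, $\Delta,\Lambda$ linear; finite sets of $x:A$ with distinct names; comma = disjoint union). Rules ($\Gamma$ shared): (idR) $\Gamma;x:A\vdash[x\leftrightarrow y]::y:A$. (idL) $\Gamma;x:A,y:A^\perp\vdash[x\leftrightarrow y]::\emptyset$. (1R) $\Gamma;\emptyset\vdash x[\,].\mathbf 0::x:\mathbf 1$. (1L) $\Gamma;\Delta\vdash P::\Lambda\Rightarrow\Gamma;\Delta,x:\mathbf 1\vdash x(\,).P::\Lambda$. (⊥R) $\Gamma;\Delta\vdash P::\Lambda\Rightarrow\Gamma;\Delta\vdash x(\,).P::\Lambda,x:\bot$. (⊥L) $\Gamma;x:\bot\vdash x[\,].\mathbf 0::\emptyset$. (⊗R) $\Gamma;\Delta\vdash P::\Lambda,y:A$, $\Gamma;\Delta'\vdash Q::\Lambda',x:B\Rightarrow\Gamma;\Delta,\Delta'\vdash\nu y\,x[y].(P|Q)::\Lambda,\Lambda',x:A\otimes B$. (⊗L) $\Gamma;\Delta,y:A,x:B\vdash P::\Lambda\Rightarrow\Gamma;\Delta,x:A\otimes B\vdash x(y).P::\Lambda$. (⅋R) $\Gamma;\Delta\vdash P::\Lambda,y:A,x:B\Rightarrow\Gamma;\Delta\vdash x(y).P::\Lambda,x:A⅋B$. (⅋L) $\Gamma;\Delta,y:A\vdash P::\Lambda$, $\Gamma;\Delta',x:B\vdash Q::\Lambda'\Rightarrow\Gamma;\Delta,\Delta',x:A⅋B\vdash\nu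 y\,x[y].(P|Q)::\Lambda,\Lambda'$. (⊸R) $\Gamma;\Delta,y:A\vdash P::\Lambda,x:B\Rightarrow\Gamma;\Delta\vdash x(y).P::\Lambda,x:A\multimap B$. (⊸L) $\Gamma;\Delta\vdash P::\Lambda,y:A$, $\Gamma;\Delta',x:B\vdash Q::\Lambda'\Rightarrow\Gamma;\Delta,\Delta',x:A\multimap B\vdash\nu y\,x[y].(P|Q)::\Lambda,\Lambda'$. (⊕R) $\Gamma;\Delta\vdash P::\Lambda,x:A_j$, $j\in I\Rightarrow\Gamma;\Delta\vdash x\triangleleft j.P::\Lambda,x:\oplus\{i:A_i\}_{i\in I}$. (⊕L) $\forall i\in I.\ \Gamma;\Delta,x:A_i\vdash P_i::\Lambda\Rightarrow\Gamma;\Delta,x:\oplus\{i:A_i\}_{i\in I}\vdash x\triangleright\{i:P_i\}_{i\in I}::\Lambda$. (&R) $\forall i\in I.\ \Gamma;\Delta\vdash P_i::\Lambda,x:A_i\Rightarrow\Gamma;\Delta\vdash x\triangleright\{i:P_i\}_{i\in I}::\Lambda,x:\&\{i:A_i\}_{i\in I}$. (&L) $\Gamma;\Delta,x:A_j\vdash P::\Lambda$, $j\in I\Rightarrow\Gamma;\Delta,x:\&\{i:A_i\}_{i\in I}\vdash x\triangleleft j.P::\Lambda$. (copyR) $\Gamma,u:A;\Delta\vdash P::\Lambda,x:A^\perp\Rightarrow\Gamma,u:A;\Delta\vdash\nu x\,u[x].P::\Lambda$. (copyL) $\Gamma,u:A;\Delta,x:A\vdash P::\Lambda\Rightarrow\Gamma,u:A;\Delta\vdash\nu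 x\,u[x].P::\Lambda$. (!R) $\Gamma;\emptyset\vdash P::y:A\Rightarrow\Gamma;\emptyset\vdash{!}x(y).P::x:{!}A$. (!L) $\Gamma,u:A;\Delta\vdash P::\Lambda\Rightarrow\Gamma;\Delta,x:{!}A\vdash P\{x/u\}::\Lambda$. (?R) $\Gamma,u:A;\Delta\vdash P::\Lambda\Rightarrow\Gamma;\Delta\vdash P\{x/u\}::\Lambda,x:{?}A^\perp$. (?L) $\Gamma;y:A\vdash P::\emptyset\Rightarrow\Gamma;x:{?}A\vdash{!}x(y).P::\emptyset$. (cutRL) $\Gamma;\Delta\vdash P::\Lambda,x:A$, $\Gamma;\Delta',x:A\vdash Q::\Lambda'\Rightarrow\Gamma;\Delta,\Delta'\vdash\nu x(P|Q)::\Lambda,\Lambda'$; (cutLR) premises $\Gamma;\Delta,x:A\vdash P::\Lambda$, $\Gamma;\Delta'\vdash Q::\Lambda',x:A$; (cutRR) premises $\Gamma;\Delta\vdash P::\Lambda,x:A$, $\Gamma;\Delta'\vdash Q::\Lambda',x:A^\perp$; (cutLL) premises $\Gamma;\Delta,x:A\vdash P::\Lambda$, $\Gamma;\Delta',x:A^\perp\vdash Q::\Lambda'$ (same conclusion). (cut!R) $\Gamma,u:A;\Delta\vdash P::\Lambda$, $\Gamma;\emptyset\vdash Q::x:A\Rightarrow\Gamma;\Delta\vdash\nu u(P|{!}u(x).Q)::\Lambda$. (cut!L) $\Gamma;\emptyset\vdash P::x:A$, $\Gamma,u:A;\Delta\vdash Q::\Lambda\Rightarrow\Gamma;\Delta\vdash\nu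 u({!}u(x).P|Q)::\Lambda$. (cut?R) $\Gamma,u:A;\Delta\vdash P::\Lambda$, $\Gamma;x:A^\perp\vdash Q::\emptyset\Rightarrow\Gamma;\Delta\vdash\nu u(P|{!}u(x).Q)::\Lambda$. (cut?L) $\Gamma;x:A^\perp\vdash P::\emptyset$, $\Gamma,u:A;\Delta\vdash Q::\Lambda\Rightarrow\Gamma;\Delta\vdash\nu u({!}u(x).P|Q)::\Lambda$. **$\pi\mathsf{ILL}$**: types $A,B::=\mathbf 1\mid A\otimes B\mid A\multimap B\mid\oplus\{i:A_i\}_{i\in I}\mid\&\{i:A_i\}_{i\in I}\mid{!}A$ (no $\bot$, no ${?}$); judgments $\Gamma;\Delta\vdash_{\mathcal I}P::z:C$ (exactly one assignment on the right). Rules: (id) $\Gamma;x:A\vdash_{\mathcal I}[x\leftrightarrow y]::y:A$. (1R) $\Gamma;\emptyset\vdash_{\mathcal I}x[\,].\mathbf 0::x:\mathbf 1$. (1L) $\Gamma;\Delta\vdash_{\mathcal I}P::z:C\Rightarrow\Gamma;\Delta,x:\mathbf 1\vdash_{\mathcal I}x(\,).P::z:C$. (⊗R) $\Gamma;\Delta\vdash_{\mathcal I}P::y:A$, $\Gamma;\Delta'\vdash_{\mathcal I}Q::x:B\Rightarrow\Gamma;\Delta,\Delta'\vdash_{\mathcal I}\nu y\,x[y].(P|Q)::x:A\otimes B$. (⊗L) $\Gamma;\Delta,y:A,x:B\vdash_{\mathcal I}P::z:C\Rightarrow\Gamma;\Delta,x:A\otimes B\vdash_{\mathcal I}x(y).P::z:C$.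 (⊸R) $\Gamma;\Delta,y:A\vdash_{\mathcal I}P::x:B\Rightarrow\Gamma;\Delta\vdash_{\mathcal I}x(y).P::x:A\multimap B$. (⊸L) $\Gamma;\Delta\vdash_{\mathcal I}P::y:A$, $\Gamma;\Delta',x:B\vdash_{\mathcal I}Q::z:C\Rightarrow\Gamma;\Delta,\Delta',x:A\multimap B\vdash_{\mathcal I}\nu y\,x[y].(P|Q)::z:C$. (⊕R) $\Gamma;\Delta\vdash_{\mathcal I}P::x:A_j$, $j\in I\Rightarrow\Gamma;\Delta\vdash_{\mathcal I}x\triangleleft j.P::x:\oplus\{i:A_i\}_{i\in I}$. (⊕L) $\forall i.\ \Gamma;\Delta,x:A_i\vdash_{\mathcal I}P_i::z:C\Rightarrow\Gamma;\Delta,x:\oplus\{i:A_i\}_{i\in I}\vdash_{\mathcal I}x\triangleright\{i:P_i\}_{i\in I}::z:C$. (&R) $\forall i.\ \Gamma;\Delta\vdash_{\mathcal I}P_i::x:A_i\Rightarrow\Gamma;\Delta\vdash_{\mathcal I}x\triangleright\{i:P_i\}_{i\in I}::x:\&\{i:A_i\}_{i\in I}$. (&L) $\Gamma;\Delta,x:A_j\vdash_{\mathcal I}P::z:C$, $j\in I\Rightarrow\Gamma;\Delta,x:\&\{i:A_i\}_{i\in I}\vdash_{\mathcal I}x\triangleleft j.P::z:C$. (copy) $\Gamma,u:A;\Delta,x:A\vdash_{\mathcal I}P::z:C\Rightarrow\Gamma,u:A;\Delta\vdash_{\mathcal I}\nu x\,u[x].P::z:C$. (!R) $\Gamma;\emptyset\vdash_{\mathcal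 I}P::y:A\Rightarrow\Gamma;\emptyset\vdash_{\mathcal I}{!}x(y).P::x:{!}A$. (!L) $\Gamma,u:A;\Delta\vdash_{\mathcal I}P::z:C\Rightarrow\Gamma;\Delta,x:{!}A\vdash_{\mathcal I}P\{x/u\}::z:C$. (cutRL) $\Gamma;\Delta\vdash_{\mathcal I}P::x:A$, $\Gamma;\Delta',x:A\vdash_{\mathcal I}Q::z:C\Rightarrow\Gamma;\Delta,\Delta'\vdash_{\mathcal I}\nu x(P|Q)::z:C$. (cutLR) $\Gamma;\Delta,x:A\vdash_{\mathcal I}P::z:C$, $\Gamma;\Delta'\vdash_{\mathcal I}Q::x:A\Rightarrow\Gamma;\Delta,\Delta'\vdash_{\mathcal I}\nu x(P|Q)::z:C$. (cut!R) $\Gamma,u:A;\Delta\vdash_{\mathcal I}P::z:C$, $\Gamma;\emptyset\vdash_{\mathcal I}Q::x:A\Rightarrow\Gamma;\Delta\vdash_{\mathcal I}\nu u(P|{!}u(x).Q)::z:C$. (cut!L) $\Gamma;\emptyset\vdash_{\mathcal I}P::x:A$, $\Gamma,u:A;\Delta\vdash_{\mathcal I}Q::z:C\Rightarrow\Gamma;\Delta\vdash_{\mathcal I}\nu u({!}u(x).P|Q)::z:C$. *)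

From Stdlib Require Import List Arith Sorted Permutation.
Import ListNotations.

Definition name := nat.
Definition label := nat.

Inductive typ : Type :=
| One : typ
| Bot : typ
| Tens : typ -> typ -> typ
| Lolli : typ -> typ -> typ
| Plus : list (label * typ) -> typ   (* ⊕{i:A_i}_{i∈I}, I = labels of the list *)
| With : list (label * typ) -> typ
| Bang : typ -> typ
| Quest : typ -> typ.

Fixpoint dual (A : typ) : typ :=
  match A with
  | One => Bot
  | Bot => One
  | Tens A B => Lolli A (dual B)
  | Lolli A B => Tens A (dual B)
  | Plus l => With (map (fun p => (fst p, dual (snd p))) l)
  | With l => Plus (map (fun p => (fst p, dual (snd p))) l)
  | Bang A => Quest (dual A)
  | Quest A => Bang (dual A)
  end.

Definition ParT (A B : typ) : typ := Lolli (dual A) B.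

(** Label-indexed families are represented canonically: labels strictly
    increasing (so each finite family I has exactly one representation). *)
Inductive wf_typ : typ -> Prop :=
| wf_One : wf_typ One
| wf_Bot : wf_typ Bot
| wf_Tens A B : wf_typ A -> wf_typ B -> wf_typ (Tens A B)
| wf_Lolli A B : wf_typ A -> wf_typ B -> wf_typ (Lolli A B)
| wf_Plus l : Sorted lt (map fst l) -> (forall i A, In (i, A) l -> wf_typ A) ->
    wf_typ (Plus l)
| wf_With l : Sorted lt (map fst l) -> (forall i A, In (i, A) l -> wf_typ A) ->
    wf_typ (With l)
| wf_Bang A : wf_typ A -> wf_typ (Bang A)
| wf_Quest A : wf_typ A -> wf_typ (Quest A).

Inductive ill_typ : typ -> Prop :=
| ill_One : ill_typ One
| ill_Tens A B : ill_typ A -> ill_typ B -> ill_typ (Tens A B)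
| ill_Lolli A B : ill_typ A -> ill_typ B -> ill_typ (Lolli A B)
| ill_Plus l : (forall i A, In (i, A) l -> ill_typ A) -> ill_typ (Plus l)
| ill_With l : (forall i A, In (i, A) l -> ill_typ A) -> ill_typ (With l)
| ill_Bang A : ill_typ A -> ill_typ (Bang A).

Inductive proc : Type :=
| Zero : proc
| Nu : name -> proc -> proc                    (* ν x P   (binds x) *)
| PPar : proc -> proc -> proc
| Send : name -> name -> proc -> proc
| Recv : name -> name -> proc -> proc          (* x(y).P  (binds y) *)
| Sel : name -> label -> proc -> proc
| Bra : name -> list (label * proc) -> proc
| Rep : name -> name -> proc -> proc           (* !x(y).P (binds y) *)
| Fwd : name -> name -> proc
| ESend : name -> proc -> proc
| ERecv : name -> proc -> proc.

Definition swapn (a b n : name) : name :=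
  if Nat.eqb n a then b else if Nat.eqb n b then a else n.

Fixpoint swapP (a b : name) (P : proc) : proc :=
  match P with
  | Zero => Zero
  | Nu x P => Nu (swapn a b x) (swapP a b P)
  | PPar P Q => PPar (swapP a b P) (swapP a b Q)
  | Send x y P => Send (swapn a b x) (swapn a b y) (swapP a b P)
  | Recv x y P => Recv (swapn a b x) (swapn a b y) (swapP a b P)
  | Sel x l P => Sel (swapn a b x) l (swapP a b P)
  | Bra x bs => Bra (swapn a b x) (map (fun p => (fst p, swapP a b (snd p))) bs)
  | Rep x y P => Rep (swapn a b x) (swapn a b y) (swapP a b P)
  | Fwd x y => Fwd (swapn a b x) (swapn a b y)
  | ESend x P => ESend (swapn a b x) (swapP a b P)
  | ERecv x P => ERecv (swapn a b x) (swapP a b P)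
  end.

Fixpoint names (P : proc) : list name :=
  match P with
  | Zero => []
  | Nu x P => x :: names P
  | PPar P Q => names P ++ names Q
  | Send x y P => x :: y :: names P
  | Recv x y P => x :: y :: names P
  | Sel x _ P => x :: names P
  | Bra x bs => x :: flat_map (fun p => names (snd p)) bs
  | Rep x y P => x :: y :: names P
  | Fwd x y => [x; y]
  | ESend x P => x :: names P
  | ERecv x P => x :: names P
  end.

Fixpoint bn (P : proc) : list name :=
  match P with
  | Zero => []
  | Nu x P => x :: bn P
  | PPar P Q => bn P ++ bn Q
  | Send _ _ P => bn P
  | Recv _ y P => y :: bn P
  | Sel _ _ P => bn P
  | Bra _ bs => flat_map (fun p => bn (snd p)) bs
  | Rep _ y P => y :: bn P
  | Fwd _ _ => []
  | ESend _ P => bn P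
  | ERecv _ P => bn P
  end.

(** naive substitution P{x/u} of the free occurrences of u by x; it is
    capture-avoiding whenever x is not a bound name of P. *)
Definition rn (u x n : name) : name := if Nat.eqb n u then x else n.

Fixpoint subst (u x : name) (P : proc) : proc :=
  match P with
  | Zero => Zero
  | Nu y P => if Nat.eqb y u then Nu y P else Nu y (subst u x P)
  | PPar P Q => PPar (subst u x P) (subst u x Q)
  | Send a b P => Send (rn u x a) (rn u x b) (subst u x P)
  | Recv a y P => Recv (rn u x a) y (if Nat.eqb y u then P else subst u x P)
  | Sel a l P => Sel (rn u x a) l (subst u x P)
  | Bra a bs => Bra (rn u x a) (map (fun p => (fst p, subst u x (snd p))) bs)
  | Rep a y P => Rep (rn u x a) y (if Nat.eqb y u then P else subst u x P)
  | Fwd a b => Fwd (rn u x a) (rn u x b)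
  | ESend a P => ESend (rn u x a) (subst u x P)
  | ERecv a P => ERecv (rn u x a) (subst u x P)
  end.

(** α-equivalence (nominal style, via swapping with a fresh name) *)
Inductive aeq : proc -> proc -> Prop :=
| aeq_zero : aeq Zero Zero
| aeq_nu x y z P Q :
    ~ In z (x :: y :: names P ++ names Q) ->
    aeq (swapP x z P) (swapP y z Q) -> aeq (Nu x P) (Nu y Q)
| aeq_par P P' Q Q' : aeq P P' -> aeq Q Q' -> aeq (PPar P Q) (PPar P' Q')
| aeq_send x y P Q : aeq P Q -> aeq (Send x y P) (Send x y Q)
| aeq_recv x y y' z P Q :
    ~ In z (x :: y :: y' :: names P ++ names Q) ->
    aeq (swapP y z P) (swapP y' z Q) -> aeq (Recv x y P) (Recv x y' Q)
| aeq_sel x l P Q : aeq P Q -> aeq (Sel x l P) (Sel x l Q)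
| aeq_bra x bs bs' :
    map fst bs = map fst bs' ->
    (forall k P Q, nth_error (map snd bs) k = Some P ->
                   nth_error (map snd bs') k = Some Q -> aeq P Q) ->
    aeq (Bra x bs) (Bra x bs')
| aeq_rep x y y' z P Q :
    ~ In z (x :: y :: y' :: names P ++ names Q) ->
    aeq (swapP y z P) (swapP y' z Q) -> aeq (Rep x y P) (Rep x y' Q)
| aeq_fwd x y : aeq (Fwd x y) (Fwd x y)
| aeq_esend x P Q : aeq P Q -> aeq (ESend x P) (ESend x Q)
| aeq_erecv x P Q : aeq P Q -> aeq (ERecv x P) (ERecv x Q).

(** * Contexts: finite sets of assignments x:A with distinct names,
    represented as lists up to permutation. *)
Definition ctx := list (name * typ).
Definition dom (c : ctx) : list name := map fst c.

(** well-formed judgment: all names in Γ, Δ, Λ pairwise distinct (comma is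
    disjoint union) and all types well-formed. *)
Definition wfj (G D L : ctx) : Prop :=
  NoDup (dom (G ++ D ++ L)) /\ (forall x A, In (x, A) (G ++ D ++ L) -> wf_typ A).

Definition fresh (y : name) (G D L : ctx) : Prop := ~ In y (dom (G ++ D ++ L)).

(** * piULL :  ULL G D L P  means  Γ;Δ ⊢ P :: Λ *)
Inductive ULL : ctx -> ctx -> ctx -> proc -> Prop :=
| U_idR G x y A : wfj G [(x, A)] [(y, A)] ->
    ULL G [(x, A)] [(y, A)] (Fwd x y)
| U_idL G x y A : wfj G [(x, A); (y, dual A)] [] ->
    ULL G [(x, A); (y, dual A)] [] (Fwd x y)
| U_1R G x : wfj G [] [(x, One)] ->
    ULL G [] [(x, One)] (ESend x Zero)
| U_1L G D L x P : wfj G ((x, One) :: D) L ->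
    ULL G D L P -> ULL G ((x, One) :: D) L (ERecv x P)
| U_botR G D L x P : wfj G D ((x, Bot) :: L) ->
    ULL G D L P -> ULL G D ((x, Bot) :: L) (ERecv x P)
| U_botL G x : wfj G [(x, Bot)] [] ->
    ULL G [(x, Bot)] [] (ESend x Zero)
| U_tensR G D D' L L' x y A B P Q :
    wfj G (D ++ D') ((x, Tens A B) :: L ++ L') ->
    fresh y G (D ++ D') ((x, Tens A B) :: L ++ L') ->
    ULL G D ((y, A) :: L) P -> ULL G D' ((x, B) :: L') Q ->
    ULL G (D ++ D') ((x, Tens A B) :: L ++ L') (Nu y (Send x y (PPar P Q)))
| U_tensL G D L x y A B P : wfj G ((x, Tens A B) :: D) L ->
    ULL G ((y, A) :: (x, B) :: D) L P ->
    ULL G ((x, Tens A B) :: D) L (Recv x y P)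
| U_parR G D L x y A B P : wfj G D ((x, ParT A B) :: L) ->
    ULL G D ((y, A) :: (x, B) :: L) P ->
    ULL G D ((x, ParT A B) :: L) (Recv x y P)
| U_parL G D D' L L' x y A B P Q :
    wfj G ((x, ParT A B) :: D ++ D') (L ++ L') ->
    fresh y G ((x, ParT A B) :: D ++ D') (L ++ L') ->
    ULL G ((y, A) :: D) L P -> ULL G ((x, B) :: D') L' Q ->
    ULL G ((x, ParT A B) :: D ++ D') (L ++ L') (Nu y (Send x y (PPar P Q)))
| U_lolliR G D L x y A B P : wfj G D ((x, Lolli A B) :: L) ->
    ULL G ((y, A) :: D) ((x, B) :: L) P ->
    ULL G D ((x, Lolli A B) :: L) (Recv x y P)
| U_lolliL G D D' L L' x y A B P Q :
    wfj G ((x, Lolli A B) :: D ++ D') (L ++ L') ->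
    fresh y G ((x, Lolli A B) :: D ++ D') (L ++ L') ->
    ULL G D ((y, A) :: L) P -> ULL G ((x, B) :: D') L' Q ->
    ULL G ((x, Lolli A B) :: D ++ D') (L ++ L') (Nu y (Send x y (PPar P Q)))
| U_plusR G D L x l j A P : wfj G D ((x, Plus l) :: L) ->
    In (j, A) l -> ULL G D ((x, A) :: L) P ->
    ULL G D ((x, Plus l) :: L) (Sel x j P)
| U_plusL G D L x l bs : wfj G ((x, Plus l) :: D) L ->
    map fst bs = map fst l ->
    (forall i A Pi, In (i, A) l -> In (i, Pi) bs -> ULL G ((x, A) :: D) L Pi) ->
    ULL G ((x, Plus l) :: D) L (Bra x bs)
| U_withR G D L x l bs : wfj G D ((x, With l) :: L) ->
    map fst bs = map fst l ->
    (forall i A Pi, In (i, A) l -> In (i, Pi) bs -> ULL G D ((x, A) :: L) Pi) ->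
    ULL G D ((x, With l) :: L) (Bra x bs)
| U_withL G D L x l j A P : wfj G ((x, With l) :: D) L ->
    In (j, A) l -> ULL G ((x, A) :: D) L P ->
    ULL G ((x, With l) :: D) L (Sel x j P)
| U_copyR G D L u x A P : wfj ((u, A) :: G) D L ->
    ULL ((u, A) :: G) D ((x, dual A) :: L) P ->
    ULL ((u, A) :: G) D L (Nu x (Send u x P))
| U_copyL G D L u x A P : wfj ((u, A) :: G) D L ->
    ULL ((u, A) :: G) ((x, A) :: D) L P ->
    ULL ((u, A) :: G) D L (Nu x (Send u x P))
| U_bangR G x y A P : wfj G [] [(x, Bang A)] ->
    ULL G [] [(y, A)] P -> ULL G [] [(x, Bang A)] (Rep x y P)
| U_bangL G D L u x A P : wfj G ((x, Bang A) :: D) L ->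
    ~ In x (bn P) ->
    ULL ((u, A) :: G) D L P -> ULL G ((x, Bang A) :: D) L (subst u x P)
| U_questR G D L u x A P : wfj G D ((x, Quest (dual A)) :: L) ->
    ~ In x (bn P) ->
    ULL ((u, A) :: G) D L P -> ULL G D ((x, Quest (dual A)) :: L) (subst u x P)
| U_questL G x y A P : wfj G [(x, Quest A)] [] ->
    ULL G [(y, A)] [] P -> ULL G [(x, Quest A)] [] (Rep x y P)
| U_cutRL G D D' L L' x A P Q : wfj G (D ++ D') (L ++ L') ->
    ULL G D ((x, A) :: L) P -> ULL G ((x, A) :: D') L' Q ->
    ULL G (D ++ D') (L ++ L') (Nu x (PPar P Q))
| U_cutLR G D D' L L' x A P Q : wfj G (D ++ D') (L ++ L') ->
    ULL G ((x, A) :: D) L P -> ULL G D' ((x, A) :: L') Q ->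
    ULL G (D ++ D') (L ++ L') (Nu x (PPar P Q))
| U_cutRR G D D' L L' x A P Q : wfj G (D ++ D') (L ++ L') ->
    ULL G D ((x, A) :: L) P -> ULL G D' ((x, dual A) :: L') Q ->
    ULL G (D ++ D') (L ++ L') (Nu x (PPar P Q))
| U_cutLL G D D' L L' x A P Q : wfj G (D ++ D') (L ++ L') ->
    ULL G ((x, A) :: D) L P -> ULL G ((x, dual A) :: D') L' Q ->
    ULL G (D ++ D') (L ++ L') (Nu x (PPar P Q))
| U_cutBangR G D L u x A P Q : wfj G D L ->
    ULL ((u, A) :: G) D L P -> ULL G [] [(x, A)] Q ->
    ULL G D L (Nu u (PPar P (Rep u x Q)))
| U_cutBangL G D L u x A P Q : wfj G D L ->
    ULL G [] [(x, A)] P -> ULL ((u, A) :: G) D L Q ->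
    ULL G D L (Nu u (PPar (Rep u x P) Q))
| U_cutQuestR G D L u x A P Q : wfj G D L ->
    ULL ((u, A) :: G) D L P -> ULL G [(x, dual A)] [] Q ->
    ULL G D L (Nu u (PPar P (Rep u x Q)))
| U_cutQuestL G D L u x A P Q : wfj G D L ->
    ULL G [(x, dual A)] [] P -> ULL ((u, A) :: G) D L Q ->
    ULL G D L (Nu u (PPar (Rep u x P) Q))
(* structural: contexts are sets (lists up to permutation) *)
| U_perm G D L G' D' L' P :
    Permutation G G' -> Permutation D D' -> Permutation L L' ->
    ULL G D L P -> ULL G' D' L' P
| U_alpha G D L P P' : aeq P P' -> ULL G D L P -> ULL G D L P'.

(** * piILL :  ILL G D z C P  means  Γ;Δ ⊢_I P :: z:C *)
Definition wfi (G D : ctx) (z : name) (C : typ) : Prop :=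
  wfj G D [(z, C)] /\ (forall x A, In (x, A) (G ++ D ++ [(z, C)]) -> ill_typ A).

Inductive ILL : ctx -> ctx -> name -> typ -> proc -> Prop :=
| I_id G x y A : wfi G [(x, A)] y A ->
    ILL G [(x, A)] y A (Fwd x y)
| I_1R G x : wfi G [] x One ->
    ILL G [] x One (ESend x Zero)
| I_1L G D x z C P : wfi G ((x, One) :: D) z C ->
    ILL G D z C P -> ILL G ((x, One) :: D) z C (ERecv x P)
| I_tensR G D D' x y A B P Q :
    wfi G (D ++ D') x (Tens A B) ->
    fresh y G (D ++ D') [(x, Tens A B)] ->
    ILL G D y A P -> ILL G D' x B Q ->
    ILL G (D ++ D') x (Tens A B) (Nu y (Send x y (PPar P Q)))
| I_tensL G D x y A B z C P : wfi G ((x, Tens A B) :: D) z C ->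
    ILL G ((y, A) :: (x, B) :: D) z C P ->
    ILL G ((x, Tens A B) :: D) z C (Recv x y P)
| I_lolliR G D x y A B P : wfi G D x (Lolli A B) ->
    ILL G ((y, A) :: D) x B P ->
    ILL G D x (Lolli A B) (Recv x y P)
| I_lolliL G D D' x y A B z C P Q :
    wfi G ((x, Lolli A B) :: D ++ D') z C ->
    fresh y G ((x, Lolli A B) :: D ++ D') [(z, C)] ->
    ILL G D y A P -> ILL G ((x, B) :: D') z C Q ->
    ILL G ((x, Lolli A B) :: D ++ D') z C (Nu y (Send x y (PPar P Q)))
| I_plusR G D x l j A P : wfi G D x (Plus l) ->
    In (j, A) l -> ILL G D x A P ->
    ILL G D x (Plus l) (Sel x j P)
| I_plusL G D x l bs z C : wfi G ((x, Plus l) :: D) z C ->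
    map fst bs = map fst l ->
    (forall i A Pi, In (i, A) l -> In (i, Pi) bs -> ILL G ((x, A) :: D) z C Pi) ->
    ILL G ((x, Plus l) :: D) z C (Bra x bs)
| I_withR G D x l bs : wfi G D x (With l) ->
    map fst bs = map fst l ->
    (forall i A Pi, In (i, A) l -> In (i, Pi) bs -> ILL G D x A Pi) ->
    ILL G D x (With l) (Bra x bs)
| I_withL G D x l j A z C P : wfi G ((x, With l) :: D) z C ->
    In (j, A) l -> ILL G ((x, A) :: D) z C P ->
    ILL G ((x, With l) :: D) z C (Sel x j P)
| I_copy G D u x A z C P : wfi ((u, A) :: G) D z C ->
    ILL ((u, A) :: G) ((x, A) :: D) z C P ->
    ILL ((u, A) :: G) D z C (Nu x (Send u x P))
| I_bangR G x y A P : wfi G [] x (Bang A) ->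
    ILL G [] y A P -> ILL G [] x (Bang A) (Rep x y P)
| I_bangL G D u x A z C P : wfi G ((x, Bang A) :: D) z C ->
    ~ In x (bn P) ->
    ILL ((u, A) :: G) D z C P -> ILL G ((x, Bang A) :: D) z C (subst u x P)
| I_cutRL G D D' x A z C P Q : wfi G (D ++ D') z C ->
    ILL G D x A P -> ILL G ((x, A) :: D') z C Q ->
    ILL G (D ++ D') z C (Nu x (PPar P Q))
| I_cutLR G D D' x A z C P Q : wfi G (D ++ D') z C ->
    ILL G ((x, A) :: D) z C P -> ILL G D' x A Q ->
    ILL G (D ++ D') z C (Nu x (PPar P Q))
| I_cutBangR G D u x A z C P Q : wfi G D z C ->
    ILL ((u, A) :: G) D z C P -> ILL G [] x A Q ->
    ILL G D z C (Nu u (PPar P (Rep u x Q)))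
| I_cutBangL G D u x A z C P Q : wfi G D z C ->
    ILL G [] x A P -> ILL ((u, A) :: G) D z C Q ->
    ILL G D z C (Nu u (PPar (Rep u x P) Q))
| I_perm G D G' D' z C P :
    Permutation G G' -> Permutation D D' ->
    ILL G D z C P -> ILL G' D' z C P
| I_alpha G D z C P P' : aeq P P' -> ILL G D z C P -> ILL G D z C P'.

Definition inI (P : proc) : Prop := exists G D z C, ILL G D z C P.
Definition inU (P : proc) : Prop := exists G D L, ULL G D L P.

(* Every piILL rule is an instance of a piULL rule with a singleton right context, so I is
   contained in U. Conversely, in piILL the only rule that closes a channel by an empty send is
   (1R), and empty receives do not change the offered channel, so a process that, after some
   empty receives, performs y[] must offer y. But in x(y).x().y[].0 the received y is placed on
   the left by both (⊗L) and (⊸R), hence the process is not in I, while piULL types it with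
   x : 1 ⅋ ⊥. *)
From Stdlib Require Import List Arith Permutation.
Import ListNotations.

Inductive esend_after_erecvs (y : name) : proc -> Prop :=
| esend_now R : esend_after_erecvs y (ESend y R)
| esend_later x P : esend_after_erecvs y P -> esend_after_erecvs y (ERecv x P).

Lemma swapn_l a b : swapn a b a = b.
Proof. unfold swapn. now rewrite Nat.eqb_refl. Qed.

Lemma swapn_involutive a b n : swapn a b (swapn a b n) = n.
Proof.
  unfold swapn.
  destruct (Nat.eqb_spec n a); destruct (Nat.eqb_spec n b); subst;
    repeat (rewrite ?Nat.eqb_refl; simpl);
    repeat match goal with |- context [Nat.eqb ?m ?k] => destruct (Nat.eqb_spec m k) end;
    congruence.
Qed.

Lemma swapn_inj a b m n : swapn a b m = swapn a b n -> m = n.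
Proof.
  intros Hmn. rewrite <- (swapn_involutive a b m), <- (swapn_involutive a b n).
  now rewrite Hmn.
Qed.

Lemma esend_after_erecvs_swap a b y P :
  esend_after_erecvs (swapn a b y) (swapP a b P) <-> esend_after_erecvs y P.
Proof.
  split.
  - induction P; simpl; intros H; inversion H; subst.
    + apply swapn_inj in H1. subst. constructor.
    + constructor. auto.
  - induction 1; simpl; constructor; auto.
Qed.

Lemma esend_after_erecvs_aeq y P Q :
  aeq P Q -> esend_after_erecvs y Q -> esend_after_erecvs y P.
Proof.
  intros Haeq HQ. revert P Haeq.
  induction HQ; intros P' Haeq; inversion Haeq; subst; constructor; auto.
Qed.

Lemma esend_after_erecvs_subst u x y P :
  esend_after_erecvs y (subst u x P) ->
  exists y', y = rn u x y' /\ esend_after_erecvs y' P.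
Proof.
  revert y. induction P; intros y H; simpl in H;
    repeat match type of H with context [if ?b then _ else _] => destruct b end;
    inversion H; subst.
  - eexists. split; [reflexivity | constructor].
  - destruct (IHP y) as (y' & -> & Hy'); auto.
    exists y'. split; [reflexivity | now constructor].
Qed.

Lemma ILL_wfi G D z C P : ILL G D z C P -> wfi G D z C.
Proof.
  induction 1; auto.
  destruct IHILL as [[Hnodup Hwf] Hill].
  assert (Hperm : Permutation (G ++ D ++ [(z, C)]) (G' ++ D' ++ [(z, C)]))
    by (apply Permutation_app; auto; apply Permutation_app; auto).
  repeat split.
  - eapply Permutation_NoDup; [apply Permutation_map, Hperm | exact Hnodup].
  - intros x A Hx. apply (Hwf x). eapply Permutation_in; [symmetry; exact Hperm | exact Hx].
  - intros x A Hx. apply (Hill x). eapply Permutation_in; [symmetry; exact Hperm | exact Hx].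
Qed.

Lemma wfi_offered_notin G D z C : wfi G D z C -> ~ In z (dom (G ++ D)).
Proof.
  intros [[Hnodup _] _] Hz. unfold dom in *.
  rewrite app_assoc, map_app in Hnodup.
  apply (NoDup_remove_2 _ [] z) in Hnodup. rewrite app_nil_r in Hnodup. auto.
Qed.

Lemma ILL_offered_notin G D z C P x A :
  ILL G D z C P -> In (x, A) (G ++ D) -> z <> x.
Proof.
  intros H Hx ->. apply (wfi_offered_notin _ _ _ _ (ILL_wfi _ _ _ _ _ H)).
  unfold dom. exact (in_map fst _ _ Hx).
Qed.

Lemma ILL_esend_after_erecvs_offered G D z C P y :
  ILL G D z C P -> esend_after_erecvs y P -> z = y.
Proof.
  intros H. revert y.
  induction H; intros y0 Hy; try solve [inversion Hy; subst; auto].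
  - (* (!L): the renamed name u is unrestricted, hence not the offered one *)
    apply esend_after_erecvs_subst in Hy as (y' & -> & Hy').
    rewrite (IHILL _ Hy') in *. unfold rn.
    destruct (Nat.eqb_spec y' u); auto. subst.
    exfalso. eapply ILL_offered_notin; [exact H1 | left; reflexivity | reflexivity].
  - eauto using esend_after_erecvs_aeq.
Qed.

Lemma ILL_recv_esend_after_erecvs G D z C x y P :
  esend_after_erecvs y P -> ~ ILL G D z C (Recv x y P).
Proof.
  intros Hy H. remember (Recv x y P) as Q eqn:HQ.
  revert x y P HQ Hy. induction H; intros x0 y0 P0 HQ Hy; try discriminate.
  1-2: (* (⊗L) and (⊸R) put the received name on the left *)
    injection HQ as -> -> ->;
    apply (ILL_offered_notin _ _ _ _ _ y0 A H0); [apply in_or_app; simpl; auto |];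
    eapply ILL_esend_after_erecvs_offered; eauto.
  - destruct P; simpl in HQ;
      repeat match type of HQ with context [if ?b then _ else _] => destruct b eqn:? end;
      try discriminate; injection HQ as _ <- <-.
    + exact (IHILL n n0 P eq_refl Hy).
    + apply esend_after_erecvs_subst in Hy as (y' & Hy0 & Hy').
      unfold rn in Hy0. destruct (Nat.eqb_spec y' u); subst.
      * (* the received name would be x, which (!L) forbids to be bound in P *)
        apply H0. simpl. auto.
      * exact (IHILL n y' P eq_refl Hy').
  - eauto.
  - subst. inversion H as [| | | | x y y' w Q Q' _ Haeq | | | | | |]; subst.
    apply (IHILL x0 y Q eq_refl).
    apply (esend_after_erecvs_swap y w). rewrite swapn_l.
    apply (esend_after_erecvs_aeq _ _ _ Haeq).
    pose proof (proj2 (esend_after_erecvs_swap y0 w y0 P0) Hy) as Hw.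
    now rewrite swapn_l in Hw.
Qed.

Lemma ILL_ULL G D z C P : ILL G D z C P -> ULL G D [(z, C)] P.
Proof.
  induction 1;
    repeat match goal with Hw : wfi _ _ _ _ |- _ => destruct Hw end.
  - now apply U_idR.
  - now apply U_1R.
  - now apply U_1L.
  - eapply (U_tensR G D D' [] [] x y A B); eauto.
  - now apply U_tensL.
  - eapply (U_lolliR G D [] x y A B); eauto.
  - eapply (U_lolliL G D D' [] [(z, C)] x y A B); eauto.
  - eapply U_plusR; eauto.
  - eapply U_plusL; eauto.
  - eapply U_withR; eauto.
  - eapply U_withL; eauto.
  - eapply U_copyL; eauto.
  - eapply U_bangR; eauto.
  - eapply U_bangL; eauto.
  - eapply (U_cutRL G D D' [] [(z, C)]); eauto.
  - eapply (U_cutLR G D D' [(z, C)] []); eauto.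
  - eapply U_cutBangR; eauto.
  - eapply U_cutBangL; eauto.
  - eapply U_perm; eauto.
  - eapply U_alpha; eauto.
Qed.

Lemma wfj_right_pair x y A B :
  x <> y -> wf_typ A -> wf_typ B -> wfj [] [] [(x, A); (y, B)].
Proof.
  intros Hxy HA HB. split.
  - repeat constructor; simpl; intuition.
  - intros n T [HT | [HT | []]]; injection HT as <- <-; auto.
Qed.

Lemma wfj_right_single x A : wf_typ A -> wfj [] [] [(x, A)].
Proof.
  intros HA. split.
  - repeat constructor; simpl; auto.
  - intros n T [HT | []]. now injection HT as <- <-.
Qed.

Lemma ULL_wait_then_close x y :
  x <> y -> ULL [] [] [(x, ParT One Bot)] (Recv x y (ERecv x (ESend y Zero))).
Proof.
  intros Hxy. apply U_parR.
  { apply wfj_right_single. unfold ParT. simpl. repeat constructor. }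
  apply (U_perm [] [] [(x, Bot); (y, One)]); [constructor | constructor | apply perm_swap |].
  apply U_botR; [apply wfj_right_pair; auto; constructor |].
  apply U_1R, wfj_right_single, wf_One.
Qed.

Theorem mainTheorem8 :
  (forall P : proc, inI P -> inU P) /\ (exists P : proc, inU P /\ ~ inI P).
Proof.
  split.
  - intros P (G & D & z & C & H). exists G, D, [(z, C)]. now apply ILL_ULL.
  - exists (Recv 0 1 (ERecv 0 (ESend 1 Zero))). split.
    + exists [], [], [(0, ParT One Bot)]. now apply ULL_wait_then_close.
    + intros (G & D & z & C & H).
      eapply ILL_recv_esend_after_erecvs; [| exact H]. repeat constructor.
Qed.
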